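(* Let $f\in\mathbb{R}[z_1,\dots,z_n]$ be homogeneous. Then the hyperbolicity cones of $f$ are exactly the connected components of $\mathcal{I}(f)^{\mathsf c}=\mathbb{R}^n\setminus\mathcal{I}(f)$.
   Context: For $f\in\mathbb{C}[z_1,\dots,z_n]$, $\mathcal{V}(f)\subseteq\mathbb{C}^n$ denotes its complex zero set and the imaginary projection of $f$ is $\mathcal{I}(f)=\{\Im(\mathbf z):\mathbf z\in\mathcal V(f)\}\subseteq\mathbb{R}^n$, where $\Im$ is taken componentwise. A homogeneous polynomial $f$ is hyperbolic in direction $\mathbf e\in\mathbb{R}^n$ if $f(\mathbf e)\neq 0$ and for every $\mathbf x\in\mathbb{R}^n$ the univariate polynomial $t\mapsto f(\mathbf x+t\mathbf e)$ has only real roots. In that case the hyperbolicity cone of $f$ with respect to $\mathbf e$ is $C(\mathbf e)=\{\mathbf x\in\mathbb{R}^n: f(\mathbf x+t\mathbf e)=0\Rightarrow t<0\}$. The hyperbolicity cones of $f$ are the sets $C(\mathbf e)$ for all directions $\mathbf e$ in which $f$ is hyperbolic. *)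

From Stdlib Require Import Reals List.
From mathcomp Require Import ssreflect ssrfun ssrbool eqtype ssrnat seq fintype.
Open Scope R_scope.

Definition C := (R * R)%type.
Definition Cre (z : C) : R := fst z.
Definition Cim (z : C) : R := snd z.
Definition RtoC (x : R) : C := (x, 0).
Definition Cadd (z w : C) : C := (fst z + fst w, snd z + snd w).
Definition Cmul (z w : C) : C :=
  (fst z * fst w - snd z * snd w, fst z * snd w + snd z * fst w).
Fixpoint Cpow (z : C) (k : nat) : C :=
  match k with O => (1, 0) | S k' => Cmul z (Cpow z k') end.
Definition C0 : C := (0, 0).

(* A polynomial is represented by a finite list of terms (coefficient, exponent
   vector); it denotes the sum of its terms. *)
Definition monomial (n : nat) := (R * ('I_n -> nat))%type.
Definition rpoly (n : nat) := list (monomial n).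

Definition mdeg {n : nat} (a : 'I_n -> nat) : nat :=
  List.fold_right (fun i s => (a i + s)%nat) O (enum 'I_n).

Definition mon_eval {n : nat} (m : monomial n) (z : 'I_n -> C) : C :=
  List.fold_right (fun i acc => Cmul (Cpow (z i) (snd m i)) acc)
                  (RtoC (fst m)) (enum 'I_n).

Definition peval {n : nat} (f : rpoly n) (z : 'I_n -> C) : C :=
  List.fold_right (fun m acc => Cadd (mon_eval m z) acc) C0 f.

Definition homogeneous {n : nat} (f : rpoly n) : Prop :=
  exists d : nat, forall m, List.In m f -> fst m <> 0 -> mdeg (snd m) = d.

Definition zero_set {n : nat} (f : rpoly n) (z : 'I_n -> C) : Prop :=
  peval f z = C0.

Definition imag_proj {n : nat} (f : rpoly n) (y : 'I_n -> R) : Prop :=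
  exists z : 'I_n -> C, zero_set f z /\ forall i, Cim (z i) = y i.

Definition line_pt {n : nat} (x e : 'I_n -> R) (t : C) : 'I_n -> C :=
  fun i => Cadd (RtoC (x i)) (Cmul t (RtoC (e i))).

Definition hyperbolic {n : nat} (f : rpoly n) (e : 'I_n -> R) : Prop :=
  peval f (fun i => RtoC (e i)) <> C0 /\
  forall (x : 'I_n -> R) (t : C), peval f (line_pt x e t) = C0 -> Cim t = 0.

Definition hyp_cone {n : nat} (f : rpoly n) (e : 'I_n -> R) (x : 'I_n -> R) : Prop :=
  forall t : R, peval f (line_pt x e (RtoC t)) = C0 -> t < 0.

Definition dist {n : nat} (x y : 'I_n -> R) : R :=
  sqrt (List.fold_right (fun i s => (x i - y i) ^ 2 + s) 0 (enum 'I_n)).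

Definition is_open {n : nat} (U : ('I_n -> R) -> Prop) : Prop :=
  forall x, U x -> exists eps, 0 < eps /\ forall y, dist x y < eps -> U y.

Definition connected {n : nat} (S : ('I_n -> R) -> Prop) : Prop :=
  ~ exists U V : ('I_n -> R) -> Prop,
      is_open U /\ is_open V /\
      (forall x, S x -> U x \/ V x) /\
      (exists x, S x /\ U x) /\ (exists x, S x /\ V x) /\
      (forall x, S x -> U x -> V x -> False).

Definition connected_component {n : nat} (A K : ('I_n -> R) -> Prop) : Prop :=
  (exists x, K x) /\ (forall x, K x -> A x) /\ connected K /\
  forall K' : ('I_n -> R) -> Prop,
    connected K' -> (forall x, K x -> K' x) -> (forall x, K' x -> A x) ->
    forall x, K' x -> K x.

(* Write F for the polynomial map of f and d for its degree.  A direction e is hyperbolic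
   iff e is not an imaginary projection: a zero x + t e with Im t <> 0 rescales to a zero
   with imaginary part e, and a zero z = x + i e is the point t = i of the line x + t e.
   Along a line z + t v with F(v) <> 0, t |-> F(z + t v) factors as F(v) prod_j (t - r_j) with
   d roots, so |F(z + t v)| >= |F(v)| b^d whenever t keeps distance b from the roots; played
   against a Lipschitz estimate for F, this shows that root-freeness of a region persists
   under small perturbations of z and v.  Hence C(e) is open, and so is its complement in
   {F <> 0}; C(e) is star-shaped about e, hence connected; and every y in C(e) is itself a
   hyperbolic direction (Garding), by moving the direction from e to y while the line
   x + i e + t v keeps no root with Im t >= 0.  Points outside I(f) are hyperbolic, so
   C(e) and {F <> 0} \ C(e) split any connected subset of the complement of I(f) that meets
   both: C(e) is a component.  Conversely a component containing p equals C(p). *)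

From Stdlib Require Import Reals Lra Psatz Classical.
From Stdlib Require Import FunctionalExtensionality PropExtensionality.
From mathcomp Require Import all_boot all_algebra zify.
From mathcomp Require Import Rstruct complex.
From Coquelicot Require Import Complex.
From Pilot Require Import Defs.
Open Scope R_scope.

Notation RC := Complex.RtoC.

(* [Defs.C] and [Complex.C] are both [R * R]; this lets [ring] see Coquelicot's field. *)
Ltac cring := change Defs.C with Complex.C in *; ring.

Lemma Cmod_sub_ge (a b : Complex.C) : Cmod a - Cmod b <= Cmod (a - b)%C.
Proof.
  have := Cmod_triangle (a - b)%C b.
  replace (a - b + b)%C with a by ring. lra.
Qed.

Lemma Im_sub_le_Cmod (t r : Complex.C) : Im t - Im r <= Cmod (t - r)%C.
Proof.
  have := Rmax_Cmod (t - r)%C. have := Rmax_r (Rabs (fst (t - r)%C)) (Rabs (snd (t - r)%C)).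
  have := Rle_abs (snd (t - r)%C). rewrite /Im /=. lra.
Qed.

Lemma Re_sub_le_Cmod (t r : Complex.C) : Re t - Re r <= Cmod (t - r)%C.
Proof.
  have := re_le_Cmod (t - r)%C. have := Rle_abs (Re (t - r)%C). rewrite /Re /=. lra.
Qed.

Lemma Cmod_pair_le (a b : R) : Cmod (a, b) <= Rabs a + Rabs b.
Proof.
  have Ha := Rabs_pos a. have Hb := Rabs_pos b.
  rewrite /Cmod; cbn [fst snd]; rewrite -(sqrt_pow2 (Rabs a + Rabs b)); last lra.
  apply: sqrt_le_1_alt. rewrite -(pow2_abs a) -(pow2_abs b).
  have := Rabs_pos a; have := Rabs_pos b. nra.
Qed.

Lemma Cmult_eq0_r (a b : Complex.C) : (a * b)%C = 0 -> a <> 0 -> b = 0.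
Proof. move=> Hab Ha. apply: NNPP => Hb. exact: Cmult_neq_0 Ha Hb Hab. Qed.

Lemma RC_pow_neq0 (a : R) k : a <> 0 -> (RC a ^ k)%C <> 0.
Proof. move=> Ha. apply: Cpow_nz => E. apply: Ha. exact: (f_equal fst E). Qed.

Definition lsum {I : Type} (h : I -> R) (l : list I) : R :=
  List.fold_right (fun i s => h i + s) 0 l.

Section ListSums.
Context {I : Type}.
Implicit Types (h g : I -> R) (l : list I).

Lemma lsum_cons h a l : lsum h (a :: l) = h a + lsum h l.
Proof. by []. Qed.

Lemma lsum_nonneg h l : (forall i, 0 <= h i) -> 0 <= lsum h l.
Proof. move=> Hh. elim: l => [|a l IH] /=; [lra|]. have := Hh a. lra. Qed.

Lemma lsum_ge_term h l i : (forall j, 0 <= h j) -> List.In i l -> h i <= lsum h l.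
Proof.
  move=> Hh. elim: l => [|a l IH] //= [->|Hi]; have := lsum_nonneg h l Hh; first lra.
  have := IH Hi. have := Hh a. lra.
Qed.

Lemma lsum_ext h g l : (forall i, h i = g i) -> lsum h l = lsum g l.
Proof. move=> E. elim: l => [|a l IH] //=. by rewrite E IH. Qed.

Lemma lsum_scale h c l : lsum (fun i => c * h i) l = c * lsum h l.
Proof. elim: l => [|a l IH] /=; [ring|]. rewrite IH. ring. Qed.

Lemma lsum_sq_le h l : (forall i, 0 <= h i) -> lsum (fun i => h i ^ 2) l <= lsum h l ^ 2.
Proof.
  move=> Hh. elim: l => [|a l IH]; [rewrite /= ; nra | rewrite !lsum_cons].
  have := lsum_nonneg h l Hh. have := Hh a. nra.
Qed.

End ListSums.

Section Coordinates.
Context {n : nat}.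
Implicit Types x y e : 'I_n -> R.

Lemma In_enum (i : 'I_n) : List.In i (enum 'I_n).
Proof.
  have : i \in enum 'I_n by rewrite mem_enum.
  elim: (enum 'I_n) => [|a l IH] //=.
  rewrite in_cons => /orP [/eqP ->|Hi]; [by left | right; exact: IH].
Qed.

Definition norm1 x : R := lsum (fun i => Rabs (x i)) (enum 'I_n).

Lemma norm1_ge0 x : 0 <= norm1 x.
Proof. apply: lsum_nonneg => i. exact: Rabs_pos. Qed.

Lemma abs_le_norm1 x i : Rabs (x i) <= norm1 x.
Proof.
  apply: (lsum_ge_term (fun j => Rabs (x j))); [move=> j; exact: Rabs_pos | exact: In_enum].
Qed.

Lemma dist_E x y : dist x y = sqrt (lsum (fun i => (x i - y i) ^ 2) (enum 'I_n)).
Proof. by []. Qed.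

Lemma dist_ge0 x y : 0 <= dist x y.
Proof. exact: sqrt_pos. Qed.

Lemma dist_coord x y i : Rabs (x i - y i) <= dist x y.
Proof.
  rewrite dist_E -sqrt_Rsqr_abs Rsqr_pow2. apply: sqrt_le_1_alt.
  apply: (lsum_ge_term (fun j => (x j - y j) ^ 2)); [move=> j; exact: pow2_ge_0 | exact: In_enum].
Qed.

Lemma dist_le_norm1 x y : dist x y <= norm1 (fun i => x i - y i).
Proof.
  rewrite dist_E -(sqrt_pow2 (norm1 _) (norm1_ge0 _)). apply: sqrt_le_1_alt.
  rewrite (lsum_ext _ (fun i => Rabs (x i - y i) ^ 2)); last by move=> i; rewrite pow2_abs.
  apply: lsum_sq_le => i. exact: Rabs_pos.
Qed.

Lemma abs_le_norm1_dist x x' i : Rabs (x' i) <= norm1 x + dist x x'.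
Proof.
  have := abs_le_norm1 x i. have := dist_coord x x' i.
  have := Rabs_triang (x i) (x' i - x i). rewrite Rabs_minus_sym.
  replace (x i + (x' i - x i)) with (x' i) by ring. lra.
Qed.

Definition seg x e (u : R) : 'I_n -> R := fun i => (1 - u) * x i + u * e i.

Lemma seg0 x e : seg x e 0 = x.
Proof. apply: functional_extensionality => i. rewrite /seg. ring. Qed.

Lemma seg1 x e : seg x e 1 = e.
Proof. apply: functional_extensionality => i. rewrite /seg. ring. Qed.

Lemma seg_sub x e u u' i : seg x e u i - seg x e u' i = (u - u') * (e i - x i).
Proof. rewrite /seg. ring. Qed.

Lemma dist_seg_le x e u u' :
  dist (seg x e u) (seg x e u') <= Rabs (u - u') * norm1 (fun i => e i - x i).
Proof.
  apply: (Rle_trans _ _ _ (dist_le_norm1 _ _)). rewrite /norm1 -lsum_scale. right.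
  apply: lsum_ext => i. by rewrite seg_sub Rabs_mult.
Qed.

End Coordinates.


Lemma Cpow_E (z : Complex.C) k : Defs.Cpow z k = (z ^ k)%C.
Proof. by elim: k => //= k ->. Qed.

Definition hom_deg {n : nat} (g : rpoly n) (d : nat) : Prop :=
  forall m, List.In m g -> fst m <> 0 -> mdeg (snd m) = d.

Lemma hom_deg_cons {n : nat} (m : monomial n) g d : hom_deg (m :: g) d -> hom_deg g d.
Proof. move=> H m' Hm'. apply: H. by right. Qed.

Section Evaluation.
Variable n : nat.
Implicit Types (z w : 'I_n -> Complex.C) (g : rpoly n) (a : 'I_n -> nat) (l : list 'I_n).

Fixpoint mprod a z (c : Complex.C) l : Complex.C :=
  match l with nil => c | i :: l' => (z i ^ a i * mprod a z c l')%C end.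

Fixpoint ndeg a l : nat :=
  match l with nil => O | i :: l' => (a i + ndeg a l')%nat end.

Lemma mdeg_E a : mdeg a = ndeg a (enum 'I_n).
Proof. rewrite /mdeg. by elim: (enum 'I_n) => //= i l ->. Qed.

Lemma mon_eval_E (m : monomial n) z :
  mon_eval m z = mprod (snd m) z (RC (fst m)) (enum 'I_n).
Proof. rewrite /mon_eval. elim: (enum 'I_n) => //= i l ->. by rewrite Cpow_E. Qed.

Lemma peval_nil z : peval ([::] : rpoly n) z = RC 0.
Proof. by []. Qed.

Lemma peval_cons (m : monomial n) g z :
  peval (m :: g) z = (mprod (snd m) z (RC (fst m)) (enum 'I_n) + peval g z)%C.
Proof. rewrite -mon_eval_E. by []. Qed.

Lemma peval_ext g z w : (forall i, z i = w i) -> peval g z = peval g w.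
Proof. by move=> /functional_extensionality ->. Qed.

Lemma mprod_0 a z l : mprod a z 0 l = 0.
Proof. elim: l => //= i l ->. ring. Qed.

Lemma mprod_scale a z c (lam : Complex.C) l :
  mprod a (fun i => lam * z i)%C c l = (lam ^ ndeg a l * mprod a z c l)%C.
Proof.
  elim: l => [|i l IH] /=; first ring.
  rewrite IH Cpow_mult_l Cpow_add_r. ring.
Qed.

Lemma peval_hom g d z (lam : Complex.C) :
  hom_deg g d -> peval g (fun i => lam * z i)%C = (lam ^ d * peval g z)%C.
Proof.
  elim: g => [|m g IH] Hd; first by rewrite !peval_nil; cring.
  rewrite !peval_cons IH ?mprod_scale; last exact: hom_deg_cons Hd.
  case: (Req_dec (fst m) 0) => [->|Hm]; first by rewrite mprod_0; cring.
  rewrite -mdeg_E (Hd m) //; [cring | by left].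
Qed.

End Evaluation.

Lemma Cmod_mul_sub_le (a b p q : Complex.C) :
  Cmod (a * p - b * q)%C <= Cmod a * Cmod (p - q)%C + Cmod (a - b)%C * Cmod q.
Proof.
  replace (a * p - b * q)%C with (a * (p - q) + (a - b) * q)%C by ring.
  rewrite -!Cmod_mult. exact: Cmod_triangle.
Qed.

Lemma Cmod_mul_sub_weighted (a b p q : Complex.C) (M A P Da Dp : R) :
  0 <= M -> Cmod a <= A -> Cmod q <= P ->
  M * Cmod (a - b)%C <= Da -> M * Cmod (p - q)%C <= Dp ->
  M * Cmod (a * p - b * q)%C <= A * Dp + Da * P.
Proof.
  move=> HM Ha Hq Hab Hpq.
  have Ea : Cmod a * (M * Cmod (p - q)%C) <= A * Dp.
  { apply: Rmult_le_compat => //; [exact: Cmod_ge_0 | exact: Rmult_le_pos (Cmod_ge_0 _)]. }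
  have Eq : M * Cmod (a - b)%C * Cmod q <= Da * P.
  { apply: Rmult_le_compat => //; [exact: Rmult_le_pos (Cmod_ge_0 _) | exact: Cmod_ge_0]. }
  have := Rmult_le_compat_l _ _ _ HM (Cmod_mul_sub_le a b p q). nra.
Qed.

Lemma Cpow_lip (a b : Complex.C) (M dl : R) k :
  0 <= M -> Cmod a <= M -> Cmod b <= M -> Cmod (a - b)%C <= dl ->
  M * Cmod (a ^ k - b ^ k)%C <= INR k * dl * M ^ k.
Proof.
  move=> HM Ha Hb Hab. elim: k => [|k IH].
  - replace (a ^ 0 - b ^ 0)%C with (RC 0) by (simpl; ring). rewrite Cmod_0 /=. lra.
  - rewrite !Cpow_S. apply: Rle_trans.
    + apply: (Cmod_mul_sub_weighted _ _ _ _ M M (M ^ k) (dl * M)) => //.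
      * by rewrite Cmod_pow; apply: pow_incr; split; [exact: Cmod_ge_0 | ].
      * have := Cmod_ge_0 (a - b)%C. nra.
      * exact: IH.
    + right. rewrite S_INR /=. ring.
Qed.

Definition coefsum {n : nat} (g : rpoly n) : R := lsum (fun m => Rabs (fst m)) g.

Lemma coefsum_ge0 {n : nat} (g : rpoly n) : 0 <= coefsum g.
Proof. apply: lsum_nonneg => m. exact: Rabs_pos. Qed.

Section Lipschitz.
Variables (n : nat) (z w : 'I_n -> Complex.C) (M dl : R).
Hypotheses (HM : 1 <= M) (Hdl : 0 <= dl)
  (Hz : forall i, Cmod (z i) <= M) (Hw : forall i, Cmod (w i) <= M)
  (Hzw : forall i, Cmod (z i - w i)%C <= dl).

Lemma mprod_bound (v : 'I_n -> Complex.C) a c l :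
  (forall i, Cmod (v i) <= M) -> Cmod (mprod n a v c l) <= Cmod c * M ^ ndeg n a l.
Proof.
  move=> Hv. elim: l => [|i l IH] /=; first lra.
  rewrite Cmod_mult Cmod_pow pow_add.
  have := pow_incr _ _ (a i) (conj (Cmod_ge_0 (v i)) (Hv i)).
  have := pow_le (Cmod (v i)) (a i) (Cmod_ge_0 _). have := Cmod_ge_0 (mprod n a v c l).
  have := Cmod_ge_0 c. have := pow_le M (ndeg n a l). nra.
Qed.

Lemma mprod_lip a c l :
  M * Cmod (mprod n a z c l - mprod n a w c l)%C
    <= Cmod c * INR (ndeg n a l) * dl * M ^ ndeg n a l.
Proof.
  elim: l => [|i l IH] /=.
  - replace (c - c)%C with (RC 0) by ring. rewrite Cmod_0 /=. lra.
  - apply: Rle_trans.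
    + apply: (Cmod_mul_sub_weighted _ _ _ _ M (M ^ a i) (Cmod c * M ^ ndeg n a l)) => //.
      * lra.
      * by rewrite Cmod_pow; apply: pow_incr; split; [exact: Cmod_ge_0 | ].
      * exact: mprod_bound Hw.
      * apply: (Cpow_lip _ _ _ _ _ _ (Hz i) (Hw i) (Hzw i)). lra.
      * exact: IH.
    + right. rewrite plus_INR pow_add. ring.
Qed.

Lemma peval_lip (g : rpoly n) d : hom_deg g d ->
  M * Cmod (peval g z - peval g w)%C <= coefsum g * INR d * dl * M ^ d.
Proof.
  have HdM : 0 <= INR d * dl * M ^ d.
  { apply: Rmult_le_pos; [exact: Rmult_le_pos (pos_INR d) Hdl | apply: pow_le; lra]. }
  elim: g => [|m g IH] Hd.
  - rewrite !peval_nil. replace (RC 0 - RC 0)%C with (RC 0) by ring.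
    rewrite Cmod_0 /coefsum /=. lra.
  - rewrite !peval_cons /coefsum lsum_cons -/(coefsum g).
    set u := mprod n _ z _ _. set v := mprod n _ w _ _.
    replace (u + peval g z - (v + peval g w))%C with ((u - v) + (peval g z - peval g w))%C by cring.
    have Hm : M * Cmod (u - v)%C <= Rabs (fst m) * INR d * dl * M ^ d.
    { case: (Req_dec (fst m) 0) => [E|E].
      - rewrite /u /v E !mprod_0. replace (RC 0 - RC 0)%C with (RC 0) by ring.
        rewrite Cmod_0 Rabs_R0. lra.
      - rewrite -(Hd m (List.in_eq m g) E) mdeg_E -Cmod_R. exact: mprod_lip. }
    have := IH (hom_deg_cons _ _ _ Hd). have := Cmod_triangle (u - v)%C (peval g z - peval g w)%C.
    nra.
Qed.

End Lipschitz.

Definition Rv {n : nat} (x : 'I_n -> R) : 'I_n -> Complex.C := fun i => RC (x i).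

Definition cline {n : nat} (z : 'I_n -> Complex.C) (v : 'I_n -> R) (t : Complex.C) :
  'I_n -> Complex.C := fun i => (z i + t * RC (v i))%C.

Fixpoint cprod (rs : list Complex.C) (t : Complex.C) : Complex.C :=
  match rs with nil => RC 1 | r :: rs' => ((t - r) * cprod rs' t)%C end.

Lemma cprod_root rs r : List.In r rs -> cprod rs r = 0.
Proof. elim: rs => [|a rs IH] //= [->|Hr]; last rewrite IH //; ring. Qed.

Lemma cprod_lower_bound rs t (b : R) : 0 <= b ->
  (forall r, List.In r rs -> b <= Cmod (t - r)%C) -> b ^ length rs <= Cmod (cprod rs t).
Proof.
  move=> Hb. elim: rs => [|a rs IH] H /=; first by rewrite Cmod_1; lra.
  rewrite Cmod_mult. apply: Rmult_le_compat; [lra | exact: pow_le | apply: H; by left |].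
  apply: IH => r Hr. apply: H. by right.
Qed.

Section Factorization.
Import GRing.Theory.
Local Open Scope ring_scope.
Notation CR := (Rcomplex Rdefinitions.R).

Definition toCR (z : Complex.C) : CR := complex.Complex (fst z) (snd z).
Definition ofCR (w : CR) : Complex.C := (complex.Re w, complex.Im w).

Lemma toCR_add (a b : Complex.C) : toCR (a + b)%C = toCR a + toCR b.
Proof. by case: a; case: b. Qed.
Lemma toCR_mul (a b : Complex.C) : toCR (a * b)%C = toCR a * toCR b.
Proof. by case: a; case: b. Qed.
Lemma toCR_sub (a b : Complex.C) : toCR (a - b)%C = toCR a - toCR b.
Proof. by case: a; case: b. Qed.
Lemma toCR_pow (w : Complex.C) k : toCR (w ^ k)%C = toCR w ^+ k.
Proof. elim: k => [|k IH]; first by []. by rewrite Cpow_S toCR_mul IH exprS. Qed.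
Lemma toCR_ofCR w : toCR (ofCR w) = w.
Proof. by case: w. Qed.
Lemma toCR_inj : injective toCR.
Proof. by case=> a b [c e] [-> ->]. Qed.

Lemma coef_mul_top (p q : {poly CR}) (m k : nat) :
  (size p <= m.+1)%N -> (size q <= k.+1)%N ->
  (p * q)`_(m + k) = p`_m * q`_k /\ (size (p * q)%R <= (m + k).+1)%N.
Proof.
  move=> Hp Hq. split; last by apply: (leq_trans (size_polyMleq p q)); lia.
  rewrite coefM.
  have Hm : (m < (m + k).+1)%N by rewrite ltnS leq_addr.
  rewrite (bigD1 (Ordinal Hm)) //= big1 ?addr0; first by rewrite addKn.
  move=> j /eqP Hj.
  have : nat_of_ord j != m by apply/eqP => E; apply: Hj; apply: val_inj.
  rewrite neq_ltn => /orP [Hlt|Hgt].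
  - rewrite [q`_ _]nth_default ?mulr0 //. apply: (leq_trans Hq). have := ltn_ord j. lia.
  - by rewrite [p`_ _]nth_default ?mul0r //; apply: (leq_trans Hp).
Qed.

Section LinePolynomial.
Variables (n : nat) (z : 'I_n -> Complex.C) (v : 'I_n -> R).

Definition linpoly (i : 'I_n) : {poly CR} := (toCR (z i))%:P + (toCR (RC (v i)))%:P * 'X.

Lemma linpoly_horner i t : (linpoly i).[toCR t] = toCR (cline z v t i).
Proof. by rewrite /linpoly hornerD hornerC hornerMX hornerC toCR_add toCR_mul mulrC. Qed.

Lemma linpoly_exp_top i k :
  (size (linpoly i ^+ k) <= k.+1)%N /\ (linpoly i ^+ k)`_k = toCR (RC (v i)) ^+ k.
Proof.
  have Hsize : (size (linpoly i) <= 2)%N.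
  { rewrite /linpoly. apply: (leq_trans (size_polyD _ _)).
    rewrite geq_max (leq_trans (size_polyC_leq1 _)) //=.
    apply: (leq_trans (size_polyMleq _ _)). rewrite size_polyX addn2 ltnS. exact: size_polyC_leq1. }
  have Hcoef : (linpoly i)`_1 = toCR (RC (v i)).
  { by rewrite /linpoly coefD coefC /= add0r coefCM coefX /= mulr1. }
  elim: k => [|k [IH1 IH2]]; first by rewrite expr0 size_poly1 coefC /= expr0.
  rewrite exprS. have [H1 H2] := coef_mul_top _ _ 1 k Hsize IH1.
  by rewrite add1n in H1 H2; rewrite H1 IH2 Hcoef exprS.
Qed.

Fixpoint mprod_poly (a : 'I_n -> nat) (c : Complex.C) (l : list 'I_n) : {poly CR} :=
  match l with nil => (toCR c)%:P | i :: l' => linpoly i ^+ a i * mprod_poly a c l' end.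

Lemma mprod_poly_horner a c l t :
  (mprod_poly a c l).[toCR t] = toCR (mprod n a (cline z v t) c l).
Proof.
  elim: l => [|i l IH] /=; first by rewrite hornerC.
  by rewrite hornerM horner_exp IH linpoly_horner toCR_mul toCR_pow.
Qed.

Lemma mprod_poly_top a c l : (size (mprod_poly a c l) <= (ndeg n a l).+1)%N /\
  (mprod_poly a c l)`_(ndeg n a l) = toCR (mprod n a (Rv v) c l).
Proof.
  elim: l => [|i l [IH1 IH2]] /=; first by rewrite size_polyC_leq1 coefC.
  have [E1 E2] := linpoly_exp_top i (a i).
  have [H1 H2] := coef_mul_top _ _ _ _ E1 IH1.
  by rewrite H1 E2 IH2 toCR_mul toCR_pow.
Qed.

Lemma mprod_poly_0 a l : mprod_poly a (RC 0) l = 0.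
Proof. by elim: l => [|i l IH] /=; rewrite ?IH ?mulr0. Qed.

Fixpoint line_poly (g : rpoly n) : {poly CR} :=
  match g with
  | nil => 0
  | m :: g' => mprod_poly (snd m) (RC (fst m)) (enum 'I_n) + line_poly g'
  end.

Lemma line_poly_horner g t : (line_poly g).[toCR t] = toCR (peval g (cline z v t)).
Proof.
  elim: g => [|m g IH]; first by rewrite /= horner0.
  by rewrite [line_poly _]/= hornerD IH mprod_poly_horner peval_cons toCR_add.
Qed.

Lemma line_poly_top g d : hom_deg g d ->
  (size (line_poly g) <= d.+1)%N /\ (line_poly g)`_d = toCR (peval g (Rv v)).
Proof.
  elim: g => [|m g IH] Hd; first by rewrite /= size_poly0 coef0.
  have [IH1 IH2] := IH (hom_deg_cons _ _ _ Hd).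
  have [P1 P2] : (size (mprod_poly m.2 (RC m.1) (enum 'I_n)) <= d.+1)%N /\
      (mprod_poly m.2 (RC m.1) (enum 'I_n))`_d = toCR (mprod n m.2 (Rv v) (RC m.1) (enum 'I_n)).
  { case: (Req_dec m.1 0%R) => [E|E].
    - by rewrite E mprod_poly_0 mprod_0 size_poly0 coef0.
    - rewrite -(Hd m (List.in_eq m g) E) mdeg_E. exact: mprod_poly_top. }
  rewrite [line_poly _]/=.
  split; first by apply: (leq_trans (size_polyD _ _)); rewrite geq_max P1 IH1.
  by rewrite coefD P2 IH2 peval_cons toCR_add.
Qed.

End LinePolynomial.

Lemma cprod_toCR (rs : seq (Rcomplex Rdefinitions.R)) t :
  toCR (cprod (List.map ofCR rs) t) = (\prod_(r <- rs) (toCR t - r))%R.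
Proof.
  elim: rs => [|r rs IH] /=; first by rewrite big_nil.
  by rewrite big_cons toCR_mul toCR_sub toCR_ofCR IH.
Qed.

Lemma peval_line_factor n (g : rpoly n) d (z : 'I_n -> Complex.C) (v : 'I_n -> R) :
  hom_deg g d -> peval g (Rv v) <> RC 0 ->
  exists rs, length rs = d /\
    forall t, peval g (cline z v t) = (peval g (Rv v) * cprod rs t)%C :> Complex.C.
Proof.
  move=> Hd Hv.
  have [Hs Hc] := line_poly_top n z v g d Hd.
  set P := line_poly n z v g in Hs Hc *.
  have Hcd : (P`_d != 0)%R.
  { rewrite Hc. apply/eqP => E. apply: Hv. apply: toCR_inj. by rewrite E. }
  have HsP : size P = d.+1.
  { apply/eqP; rewrite eqn_leq Hs /=. case: (leqP (size P) d) => // H.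
    by move: Hcd; rewrite nth_default // eqxx. }
  have Hlead : lead_coef P = toCR (peval g (Rv v)) by rewrite lead_coefE HsP /= -Hc.
  have [rs Hrs] := closed_field_poly_normal P.
  have Hsz : size rs = d.
  { have : size P = (size rs).+1.
    { rewrite {1}Hrs size_scale ?size_prod_XsubC //. by rewrite Hlead -Hc. }
    by rewrite HsP => -[]. }
  exists (List.map ofCR rs). split; first by rewrite List.length_map -Hsz; elim: rs {Hrs Hsz}.
  move=> t. apply: toCR_inj. rewrite toCR_mul cprod_toCR -Hlead -line_poly_horner -/P.
  rewrite {1}Hrs hornerZ horner_prod. congr (_ * _)%R.
  apply: eq_bigr => r _. by rewrite hornerXsubC.
Qed.

End Factorization.

Definition locally_constant_01 (P : R -> Prop) : Prop :=
  forall u, 0 <= u <= 1 -> exists dl, 0 < dl /\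
    forall u', 0 <= u' <= 1 -> Rabs (u' - u) < dl -> (P u' <-> P u).

Lemma locally_constant_01_imp (P : R -> Prop) : locally_constant_01 P -> P 0 -> P 1.
Proof.
  move=> Hloc HP0.
  pose E u := 0 <= u <= 1 /\ forall v, 0 <= v <= u -> P v.
  have HE0 : E 0 by split; [lra | move=> v Hv; replace v with 0 by lra].
  have [|s [Hs_ub Hs_least]] := completeness E _ (ex_intro _ 0 HE0).
  { exists 1 => u [Hu _]. lra. }
  have Hs01 : 0 <= s <= 1.
  { split; [exact: Hs_ub HE0 | apply: Hs_least => u [Hu _]; lra]. }
  have [dl [Hdl Hs]] := Hloc s Hs01.
  have [u [[Hu01 HuP] Hu]] : exists u, E u /\ s - dl < u.
  { apply: NNPP => Hn. suff : s <= s - dl by lra.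
    apply: Hs_least => u Eu. apply: Rnot_lt_le => Hlt. apply: Hn. by exists u. }
  have Hus : u <= s by apply: Hs_ub.
  have HPs : P s.
  { apply/(Hs u); [lra | rewrite Rabs_left1; lra | apply: HuP; lra]. }
  have HE' : E (Rmin 1 (s + dl / 2)).
  { have := Rmin_l 1 (s + dl / 2). have := Rmin_r 1 (s + dl / 2).
    split; [split; [apply: Rmin_glb; lra | lra] |] => v Hv.
    case: (Rle_dec v u) => Hvu; first by apply: HuP; lra.
    apply/(Hs v); [lra | apply: Rabs_def1; lra | exact: HPs]. }
  have Hle := Hs_ub _ HE'.
  suff <- : s = 1 by [].
  move: Hle. case: (Rle_dec 1 (s + dl / 2)) => H; [rewrite Rmin_left | rewrite Rmin_right]; lra.
Qed.

Lemma locally_constant_01_iff (P : R -> Prop) : locally_constant_01 P -> (P 0 <-> P 1).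
Proof.
  move=> Hloc. split; first exact: locally_constant_01_imp.
  move=> HP1. apply: NNPP => HnP0.
  suff : ~ P 1 by [].
  apply: (locally_constant_01_imp (fun u => ~ P u)) => // u Hu.
  have [dl [Hdl H]] := Hloc u Hu. exists dl. split => // u' Hu' Hd.
  have := H u' Hu' Hd. tauto.
Qed.

Section Connectedness.
Context {n : nat}.
Implicit Types A B U V : ('I_n -> R) -> Prop.

Lemma star_connected A e : A e -> (forall x u, A x -> 0 <= u <= 1 -> A (seg x e u)) ->
  connected A.
Proof.
  move=> Ae Astar [U [V [HU [HV [Hcov [[a [Aa Ua]] [[b [Ab Vb]] Hdisj]]]]]]].
  suff HUe : forall x, A x -> (U x <-> U e).
  { apply: (Hdisj b Ab _ Vb). by apply/(HUe b Ab)/(HUe a Aa). }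
  move=> x Ax. rewrite -{1}(seg0 x e) -{2}(seg1 x e).
  apply: (locally_constant_01_iff (fun u => U (seg x e u))) => u Hu.
  have Axu := Astar x u Ax Hu.
  pose S := norm1 (fun i => e i - x i). have HS : 0 <= S := norm1_ge0 _.
  have near eps : 0 < eps -> exists dl, 0 < dl /\
      forall u', Rabs (u' - u) < dl -> dist (seg x e u) (seg x e u') < eps.
  { move=> Heps. exists (eps / (S + 1)). split; first by apply: Rdiv_lt_0_compat; lra.
    move=> u' Hu'. apply: Rle_lt_trans (dist_seg_le x e u u') _. rewrite -/S.
    rewrite Rabs_minus_sym in Hu'.
    apply: (Rle_lt_trans _ (eps / (S + 1) * S)); first by apply: Rmult_le_compat_r; lra.
    apply: (Rmult_lt_reg_r (S + 1)); first lra. field_simplify; lra. }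
  case: (Hcov _ Axu) => [Uxu | Vxu].
  - have [eps [Heps Hball]] := HU _ Uxu. have [dl [Hdl Hnear]] := near eps Heps.
    exists dl. split => // u' Hu' Hd. split => // _. exact: Hball (Hnear u' Hd).
  - have [eps [Heps Hball]] := HV _ Vxu. have [dl [Hdl Hnear]] := near eps Heps.
    exists dl. split => // u' Hu' Hd.
    have Vxu' := Hball _ (Hnear u' Hd). have Axu' := Astar x u' Ax Hu'.
    split => H; exfalso; [exact: Hdisj _ Axu' H Vxu' | exact: Hdisj _ Axu H Vxu].
Qed.

Lemma connected_union A B p : connected A -> connected B -> A p -> B p ->
  connected (fun x => A x \/ B x).
Proof.
  move=> HA HB Ap Bp [U [V [HU [HV [Hcov [[a [Sa Ua]] [[b [Sb Vb]] Hdisj]]]]]]].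
  (* [A] and [B] are connected and share [p], so the side containing [p] contains both *)
  have side : forall U' V', is_open U' -> is_open V' ->
      (forall x, A x \/ B x -> U' x \/ V' x) -> (forall x, A x \/ B x -> U' x -> V' x -> False) ->
      U' p -> forall x, A x \/ B x -> U' x.
  { move=> U' V' HU' HV' Hc Hd Up x Hx. apply: NNPP => Hn.
    have V'x : V' x by case: (Hc x Hx).
    case: Hx => Hx; [apply: HA | apply: HB]; exists U', V';
      (do 2 split => //); (split; first by move=> z Hz; apply: Hc; tauto);
      (split; first by exists p); (split; first by exists x);
      move=> z Hz; apply: Hd; tauto. }
  case: (Hcov p (or_introl Ap)) => [Up | Vp].
  - apply: (Hdisj b Sb _ Vb). exact: side U V HU HV Hcov Hdisj Up b Sb.
  - apply: (Hdisj a Sa Ua). apply: (side V U) => // [x Hx | x Hx H1 H2].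
    + by case: (Hcov x Hx); [right | left].
    + exact: Hdisj x Hx H2 H1.
Qed.

End Connectedness.

Lemma exists_small (K L : R) : 0 <= K -> 0 < L -> exists dl, 0 < dl /\ dl <= 1 /\ K * dl < L.
Proof.
  move=> HK HL. exists (Rmin 1 (L / (K + 1))).
  have Hq : 0 < L / (K + 1) by apply: Rdiv_lt_0_compat; lra.
  have Hr := Rmin_r 1 (L / (K + 1)).
  split; [apply: Rmin_glb_lt; lra | split; [exact: Rmin_l |]].
  apply: (Rle_lt_trans _ (K * (L / (K + 1)))); first exact: Rmult_le_compat_l.
  apply: (Rmult_lt_reg_r (K + 1)); first lra.
  field_simplify; lra.
Qed.

Lemma neq0_of_close (a b : Complex.C) (K dl L P : R) : 0 < P -> K * dl < L ->
  L * P <= Cmod a -> Cmod (a - b)%C <= K * dl * P -> b <> 0.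
Proof.
  move=> HP Hsmall Ha Hab Hb. move: Hab. rewrite Hb. replace (a - 0)%C with a by ring. nra.
Qed.

Lemma Cmod_sub_sym (a b : Complex.C) : Cmod (a - b)%C = Cmod (b - a)%C.
Proof. by rewrite -Cmod_opp; congr Cmod; ring. Qed.

Lemma list_pos_lower_bound {A : Type} (g : A -> R) (l : list A) :
  (forall r, List.In r l -> 0 < g r) ->
  exists mu, 0 < mu <= 1 /\ forall r, List.In r l -> mu <= g r.
Proof.
  elim: l => [|a l IH] H; first by exists 1; split; [lra | done].
  have [|mu [Hmu Hl]] := IH; first by move=> r Hr; apply: H; right.
  have Ha : 0 < g a by apply: H; left.
  exists (Rmin mu (g a)). have := Rmin_l mu (g a). have := Rmin_r mu (g a).
  split; first by split; [apply: Rmin_glb_lt; lra | lra].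
  move=> r [<-|Hr]; first lra. have := Hl r Hr. lra.
Qed.

Lemma Cmod_cline_le {n : nat} (z : 'I_n -> Complex.C) v t i :
  Cmod (cline z v t i) <= Cmod (z i) + Cmod t * Rabs (v i).
Proof. rewrite /cline -Cmod_R -Cmod_mult. exact: Cmod_triangle. Qed.

Lemma cline_sub {n : nat} (z z' : 'I_n -> Complex.C) v v' t i :
  (cline z v t i - cline z' v' t i)%C = (z i - z' i + t * RC (v i - v' i))%C.
Proof. rewrite /cline. apply: injective_projections => /=; ring. Qed.

Lemma Cmod_Rv_le {n : nat} (x : 'I_n -> R) i : Cmod (Rv x i) <= norm1 x.
Proof. rewrite /Rv Cmod_R. exact: abs_le_norm1. Qed.

Lemma Cmod_Rv_sub {n : nat} (x x' : 'I_n -> R) i : Cmod (Rv x i - Rv x' i)%C = Rabs (x i - x' i).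
Proof. rewrite -Cmod_R. congr Cmod. apply: injective_projections => /=; ring. Qed.

Lemma cline0 {n : nat} (z : 'I_n -> Complex.C) v : cline z v (RC 0) = z.
Proof. apply: functional_extensionality => i. rewrite /cline. ring. Qed.

(* If [Im r <= -mu], [Cmod r <= rho] and [Im t >= 0], then [Cmod (t - r)] is at least both
   [mu] and [Cmod t - rho]; this bounds it below by a fixed multiple of [1 + Cmod t]. *)
Lemma one_plus_scaled_le (mu rho T a : R) : 0 < mu -> 0 <= rho -> 0 <= T ->
  mu <= a -> T - rho <= a -> mu / (1 + rho + mu) * (1 + T) <= a.
Proof.
  move=> Hmu Hrho HT H1 H2.
  apply: (Rmult_le_reg_r (1 + rho + mu)); first lra.
  have -> : mu / (1 + rho + mu) * (1 + T) * (1 + rho + mu) = mu * (1 + T) by field; lra.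
  case: (Rle_dec T (rho + mu)) => HTr; nra.
Qed.

Lemma mul3_le (l s p a b : R) : 0 <= l -> 0 <= s -> 0 <= p -> a <= b ->
  l * (s * a) * p <= l * s * p * b.
Proof.
  move=> Hl Hs Hp Hab. have Hlsp : 0 <= l * s * p by apply: Rmult_le_pos => //; exact: Rmult_le_pos.
  replace (l * (s * a) * p) with (l * s * p * a) by ring. exact: Rmult_le_compat_l.
Qed.

Section HyperbolicityCones.
Variables (n : nat) (f : rpoly n) (d : nat).
Hypothesis f_hom : hom_deg f d.
Implicit Types (x y e : 'I_n -> R) (z w : 'I_n -> Complex.C).

Local Notation F := (peval f).

Lemma F_scale z (lam : Complex.C) : F (fun i => lam * z i)%C = (lam ^ d * F z)%C :> Complex.C.
Proof. exact: peval_hom. Qed.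

Definition lip_const (B : R) : R := coefsum f * INR d * B ^ d.

Lemma lip_const_ge0 B : 0 <= B -> 0 <= lip_const B.
Proof.
  move=> HB. apply: Rmult_le_pos; last exact: pow_le.
  exact: Rmult_le_pos (coefsum_ge0 f) (pos_INR d).
Qed.

Lemma F_line_lip z z' v v' t (B dl : R) : 1 <= B -> 0 <= dl ->
  (forall i, Cmod (z i) <= B) -> (forall i, Cmod (z' i) <= B) ->
  (forall i, Rabs (v i) <= B) -> (forall i, Rabs (v' i) <= B) ->
  (forall i, Cmod (z i - z' i)%C <= dl) -> (forall i, Rabs (v i - v' i) <= dl) ->
  Cmod (F (cline z v t) - F (cline z' v' t))%C <= lip_const B * dl * (1 + Cmod t) ^ d.
Proof.
  move=> HB Hdl Hz Hz' Hv Hv' Hzz Hvv.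
  set T := Cmod t. have HT : 0 <= T := Cmod_ge_0 t.
  have Hline : forall w u, (forall i, Cmod (w i) <= B) -> (forall i, Rabs (u i) <= B) ->
    forall i, Cmod (cline w u t i) <= B * (1 + T).
  { move=> w u Hw Hu i. have H1 : _ <= _ + T * _ := Cmod_cline_le w u t i.
    have H2 := Hw i. have H3 := Hu i. nra. }
  have Hdiff : forall i, Cmod (cline z v t i - cline z' v' t i)%C <= dl * (1 + T).
  { move=> i. rewrite cline_sub. apply: Rle_trans (Cmod_triangle _ _) _.
    rewrite Cmod_mult Cmod_R -/T. have := Hzz i. have := Hvv i. nra. }
  have Hlip := peval_lip n _ _ (B * (1 + T)) (dl * (1 + T)) ltac:(nra) ltac:(nra)
    (Hline _ _ Hz Hv) (Hline _ _ Hz' Hv') Hdiff f d f_hom.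
  rewrite Rpow_mult_distr in Hlip. rewrite /lip_const.
  set X := Cmod _ in Hlip *. have HX : 0 <= X := Cmod_ge_0 _.
  set K := coefsum f * INR d * B ^ d * dl * (1 + T) ^ d.
  have HBX : B * X <= K.
  { apply: (Rmult_le_reg_l (1 + T)); first lra.
    replace ((1 + T) * (B * X)) with (B * (1 + T) * X) by ring.
    apply: (Rle_trans _ _ _ Hlip). right. rewrite /K. ring. }
  nra.
Qed.

Lemma F_line_lower_bound z v : F (Rv v) <> RC 0 ->
  exists rs, (forall r, List.In r rs -> F (cline z v r) = RC 0) /\
    forall t (b : R), 0 <= b -> (forall r, List.In r rs -> b <= Cmod (t - r)%C) ->
      Cmod (F (Rv v)) * b ^ d <= Cmod (F (cline z v t)).
Proof.
  move=> Hv. have [rs [Hlen Hfac]] := peval_line_factor n f d z v f_hom Hv.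
  exists rs. split => [r Hr | t b Hb Hroots]; rewrite Hfac.
  - rewrite cprod_root //. cring.
  - rewrite Cmod_mult -Hlen. apply: Rmult_le_compat_l; first exact: Cmod_ge_0.
    exact: cprod_lower_bound.
Qed.

Lemma hyperbolicE e : hyperbolic f e <->
  F (Rv e) <> RC 0 /\ forall x t, F (cline (Rv x) e t) = RC 0 -> Im t = 0.
Proof. exact: iff_refl. Qed.

Lemma hyperbolic_neq0 e : hyperbolic f e -> F (Rv e) <> RC 0.
Proof. by case. Qed.

Lemma hyp_coneE e x : hyp_cone f e x <-> forall t : R, F (cline (Rv x) e (RC t)) = RC 0 -> t < 0.
Proof. exact: iff_refl. Qed.

Lemma imag_projE y : imag_proj f y <-> exists z, F z = RC 0 /\ forall i, Im (z i) = y i.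
Proof. exact: iff_refl. Qed.

Lemma hyperbolic_not_imag_proj e : hyperbolic f e -> ~ imag_proj f e.
Proof.
  move=> /hyperbolicE [_ He] /imag_projE [z [Hz Him]].
  have : Im Ci = 0.
  { apply: (He (fun i => Re (z i))). rewrite -Hz. apply: peval_ext => i.
    rewrite /cline /Rv /= -(Him i). case: (z i) => a b. apply: injective_projections => /=; ring. }
  rewrite /Im /=. lra.
Qed.

Lemma not_imag_proj_hyperbolic e : ~ imag_proj f e -> hyperbolic f e.
Proof.
  move=> HI. apply/hyperbolicE. split.
  - move=> He. apply: HI. apply/imag_projE. exists (fun i => Ci * Rv e i)%C. split.
    + rewrite F_scale He. cring.
    + move=> i. rewrite /Im /=. ring.
  - move=> x t Ht. apply: NNPP => Ht0. apply: HI. apply/imag_projE.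
    exists (fun i => RC (/ Im t) * cline (Rv x) e t i)%C. split.
    + rewrite F_scale Ht. cring.
    + move=> i. case: t Ht Ht0 => a b _ Hb. rewrite /Im /= in Hb *. field. exact: Hb.
Qed.

Lemma hyp_cone_neq0 e x : hyp_cone f e x -> F (Rv x) <> RC 0.
Proof.
  move=> /hyp_coneE Hx Hx0. have := Hx 0. rewrite cline0 => /(_ Hx0). lra.
Qed.

Lemma hyp_cone_self e : F (Rv e) <> RC 0 -> hyp_cone f e e.
Proof.
  move=> He. apply/hyp_coneE => t Ht. apply: Rnot_le_lt => Ht0. move: Ht.
  have -> : F (cline (Rv e) e (RC t)) = (RC (1 + t) ^ d * F (Rv e))%C :> Complex.C.
  { rewrite -F_scale. congr peval. apply: functional_extensionality => i.
    apply: injective_projections => /=; ring. }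
  apply: Cmult_neq_0 => //. apply: RC_pow_neq0. lra.
Qed.

Lemma hyp_cone_seg e x u : F (Rv e) <> RC 0 -> hyp_cone f e x -> 0 <= u <= 1 ->
  hyp_cone f e (seg x e u).
Proof.
  move=> He /hyp_coneE Hx Hu.
  case: (Req_dec u 1) => [->|Hu1]; first by rewrite seg1; exact: hyp_cone_self.
  have Hu0 : 1 - u <> 0 by move=> H; apply: Hu1; lra.
  apply/hyp_coneE => t Ht.
  have E : F (cline (Rv (seg x e u)) e (RC t))
         = (RC (1 - u) ^ d * F (cline (Rv x) e (RC ((u + t) / (1 - u)))))%C :> Complex.C.
  { rewrite -F_scale. congr peval. apply: functional_extensionality => i.
    rewrite /cline /Rv /seg. apply: injective_projections => /=; field; lra. }
  move: Ht. rewrite E => /Cmult_eq0_r /(_ (RC_pow_neq0 _ d Hu0)) /Hx Hneg.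
  have : (u + t) / (1 - u) * (1 - u) < 0 by apply: Rmult_neg_pos => //; lra.
  rewrite /Rdiv Rmult_assoc Rinv_l; lra.
Qed.

Lemma F_line_lip_dist e x x' t (dl : R) : dist x x' < dl <= 1 ->
  Cmod (F (cline (Rv x) e t) - F (cline (Rv x') e t))%C
    <= lip_const (norm1 x + norm1 e + 1) * dl * (1 + Cmod t) ^ d.
Proof.
  move=> Hdl. have := norm1_ge0 x. have := norm1_ge0 e. have := dist_ge0 x x'.
  move=> *. apply: F_line_lip; try lra; move=> i.
  - have := Cmod_Rv_le x i. lra.
  - rewrite /Rv Cmod_R. have := abs_le_norm1_dist x x' i. lra.
  - have := abs_le_norm1 e i. lra.
  - have := abs_le_norm1 e i. lra.
  - rewrite Cmod_Rv_sub. have := dist_coord x x' i. lra.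
  - rewrite Rminus_diag Rabs_R0. lra.
Qed.

Lemma real_root_of_hyperbolic e x r :
  hyperbolic f e -> F (cline (Rv x) e r) = RC 0 -> r = RC (Re r).
Proof. move=> /hyperbolicE [_ He] /He. by case: r => a b /= ->. Qed.

Lemma hyp_cone_open e : hyperbolic f e -> is_open (hyp_cone f e).
Proof.
  move=> He x /hyp_coneE Hx. have He0 := hyperbolic_neq0 e He.
  have [rs [Hroots Hlow]] := F_line_lower_bound (Rv x) e He0.
  have [|mu [Hmu Hmu_le]] := list_pos_lower_bound (fun r => - Re r) rs.
  { move=> r Hr. have Hr0 := Hroots r Hr. have Er := real_root_of_hyperbolic e x r He Hr0.
    rewrite Er in Hr0. have := Hx _ Hr0. lra. }
  have Hnx := norm1_ge0 x. have Hne := norm1_ge0 e.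
  set B := norm1 x + norm1 e + 1.
  set L := Cmod (F (Rv e)) * mu ^ d.
  have HL : 0 < L by apply: Rmult_lt_0_compat; [exact/Cmod_gt_0 | apply: pow_lt; lra].
  have [dl [Hdl [Hdl1 Hsmall]]] :=
    exists_small (lip_const B) L (lip_const_ge0 B ltac:(rewrite /B; lra)) HL.
  exists dl. split => // x' Hxx'. apply/hyp_coneE => t Ht. apply: Rnot_le_lt => Ht0.
  move: Ht. apply: (neq0_of_close (F (cline (Rv x) e (RC t))) _ (lip_const B) dl L ((1 + t) ^ d));
    rewrite //.
  - apply: pow_lt. lra.
  - rewrite /L Rmult_assoc -Rpow_mult_distr. apply: Hlow; first nra.
    move=> r Hr. have := Hmu_le r Hr. have := Re_sub_le_Cmod (RC t) r. rewrite /= => *. nra.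
  - have := F_line_lip_dist e x x' (RC t) dl (conj Hxx' Hdl1).
    by rewrite Cmod_R Rabs_pos_eq.
Qed.

Lemma hyp_cone_compl_open e x : hyperbolic f e -> F (Rv x) <> RC 0 -> ~ hyp_cone f e x ->
  exists eps, 0 < eps /\
    forall x', dist x x' < eps -> F (Rv x') <> RC 0 /\ ~ hyp_cone f e x'.
Proof.
  move=> He Hx Hnc. have He0 := hyperbolic_neq0 e He.
  have [t0 [Ht0 Hroot]] : exists t0, 0 <= t0 /\ F (cline (Rv x) e (RC t0)) = RC 0.
  { apply: NNPP => Hn. apply: Hnc. apply/hyp_coneE => t Ht.
    apply: Rnot_le_lt => Ht0. apply: Hn. by exists t. }
  have {}Ht0 : 0 < t0.
  { case: (Req_dec t0 0) => [E|]; last lra. by move: Hroot; rewrite E cline0. }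
  have HP : 1 <= (1 + t0) ^ d by apply: pow_R1_Rle; lra.
  set K := lip_const (norm1 x + norm1 e + 1) * (1 + t0) ^ d.
  have HK : 0 <= K.
  { apply: Rmult_le_pos; last lra. apply: lip_const_ge0.
    have := norm1_ge0 x. have := norm1_ge0 e. lra. }
  set L := Rmin (Cmod (F (Rv x))) (Cmod (F (Rv e)) * t0 ^ d).
  have HL : 0 < L.
  { apply: Rmin_glb_lt; first exact/Cmod_gt_0.
    apply: Rmult_lt_0_compat; [exact/Cmod_gt_0 | exact: pow_lt]. }
  have [dl [Hdl [Hdl1 Hsmall]]] := exists_small K L HK HL.
  exists dl. split => // x' Hxx'.
  have Hlip t : Cmod (F (cline (Rv x) e (RC t)) - F (cline (Rv x') e (RC t)))%C
                  <= lip_const (norm1 x + norm1 e + 1) * dl * (1 + Rabs t) ^ d.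
  { rewrite -Cmod_R. exact: F_line_lip_dist. }
  split.
  - apply: (neq0_of_close (F (Rv x)) _ K dl L 1) => //; first lra.
    + rewrite Rmult_1_r. exact: Rmin_l.
    + have Hl : 0 <= lip_const (norm1 x + norm1 e + 1).
      { apply: lip_const_ge0. have := norm1_ge0 x. have := norm1_ge0 e. lra. }
      have := Hlip 0. rewrite !cline0 Rabs_R0 Rplus_0_r pow1 /K => H0.
      apply: Rle_trans H0 _.
      have := Rmult_le_compat_l _ _ _ (Rmult_le_pos _ _ Hl (Rlt_le _ _ Hdl)) HP. lra.
  - move=> /hyp_coneE Hx'.
    have [rs [Hroots Hlow]] := F_line_lower_bound (Rv x') e He0.
    apply: (neq0_of_close (F (cline (Rv x') e (RC t0))) _ K dl L 1 Rlt_0_1 Hsmall _ _ Hroot).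
    + rewrite Rmult_1_r. apply: Rle_trans (Rmin_r _ _) _. apply: Hlow; first lra.
      move=> r Hr. have Hr0 := Hroots r Hr. have Er := real_root_of_hyperbolic e x' r He Hr0.
      rewrite Er in Hr0. have := Hx' _ Hr0. have := Re_sub_le_Cmod (RC t0) r. rewrite /=. lra.
    + rewrite Cmod_sub_sym. apply: Rle_trans (Hlip t0) _. rewrite Rabs_pos_eq /K; last lra.
      right. ring.
Qed.

Definition cplx (x e : 'I_n -> R) : 'I_n -> Complex.C := fun i => (x i, e i).

Section Garding.
Variables (e y : 'I_n -> R).
Hypotheses (He : hyperbolic f e) (Hy : hyp_cone f e y).

Let S := norm1 e + norm1 y.

Let S_ge0 : 0 <= S.
Proof. have := norm1_ge0 e. have := norm1_ge0 y. rewrite /S. lra. Qed.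

Lemma seg_dir_neq0 u : 0 <= u <= 1 -> F (Rv (seg y e u)) <> RC 0.
Proof.
  move=> Hu. apply: hyp_cone_neq0. apply: hyp_cone_seg => //.
  exact: hyperbolic_neq0 He.
Qed.

Lemma no_real_root x v t : Im t = 0 -> F (cline (cplx x e) v t) <> RC 0.
Proof.
  move=> Ht H. apply: (hyperbolic_not_imag_proj e He). apply/imag_projE.
  exists (cline (cplx x e) v t). split => // i. case: t Ht H => a b /= -> _. ring.
Qed.

Lemma seg_abs_le u i : 0 <= u <= 1 -> Rabs (seg y e u i) <= S.
Proof.
  move=> Hu. rewrite /seg /S.
  have H1 := abs_le_norm1 e i. have H2 := abs_le_norm1 y i.
  have H3 := Rabs_triang ((1 - u) * y i) (u * e i).
  rewrite !Rabs_mult (Rabs_pos_eq (1 - u)) ?(Rabs_pos_eq u) in H3; try lra.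
  have H4 := Rabs_pos (y i). have H5 := Rabs_pos (e i). nra.
Qed.

Lemma seg_sub_abs_le u u' i : Rabs (seg y e u i - seg y e u' i) <= S * Rabs (u - u').
Proof.
  rewrite seg_sub Rabs_mult /S Rmult_comm. apply: Rmult_le_compat_r; first exact: Rabs_pos.
  replace (e i - y i) with (e i + - y i) by ring.
  have := Rabs_triang (e i) (- y i). rewrite Rabs_Ropp.
  have := abs_le_norm1 e i. have := abs_le_norm1 y i. lra.
Qed.

Lemma F_seg_lip x u u' t : 0 <= u <= 1 -> 0 <= u' <= 1 ->
  Cmod (F (cline (cplx x e) (seg y e u) t) - F (cline (cplx x e) (seg y e u') t))%C
    <= lip_const (norm1 x + S + 1) * (S * Rabs (u - u')) * (1 + Cmod t) ^ d.
Proof.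
  move=> Hu Hu'. have := norm1_ge0 x. have := norm1_ge0 e. have := norm1_ge0 y.
  have := Rabs_pos (u - u'). rewrite /S => *.
  apply: F_line_lip; try nra; move=> i.
  - apply: Rle_trans (Cmod_pair_le _ _) _. have := abs_le_norm1 x i. have := abs_le_norm1 e i. lra.
  - apply: Rle_trans (Cmod_pair_le _ _) _. have := abs_le_norm1 x i. have := abs_le_norm1 e i. lra.
  - have := seg_abs_le u i Hu. rewrite /S. lra.
  - have := seg_abs_le u' i Hu'. rewrite /S. lra.
  - replace (cplx x e i - cplx x e i)%C with (RC 0) by ring. rewrite Cmod_0. nra.
  - exact: seg_sub_abs_le.
Qed.

Lemma F_seg_dir_lip u u' : 0 <= u <= 1 -> 0 <= u' <= 1 ->
  Cmod (F (Rv (seg y e u)) - F (Rv (seg y e u')))%C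
    <= lip_const (S + 1) * (S * Rabs (u - u')) * 2 ^ d.
Proof.
  move=> Hu Hu'.
  have E v : Rv v = cline (fun _ => RC 0) v (RC 1).
  { apply: functional_extensionality => i. rewrite /cline /Rv. ring. }
  have := norm1_ge0 e. have := norm1_ge0 y. have := Rabs_pos (u - u'). rewrite /S => *.
  rewrite !E. replace 2 with (1 + Cmod (RC 1)) by (rewrite Cmod_1; lra).
  apply: F_line_lip; try nra; move=> i.
  - rewrite Cmod_0. lra.
  - rewrite Cmod_0. lra.
  - have := seg_abs_le u i Hu. rewrite /S. lra.
  - have := seg_abs_le u' i Hu'. rewrite /S. lra.
  - replace (RC 0 - RC 0)%C with (RC 0) by ring. rewrite Cmod_0. nra.
  - exact: seg_sub_abs_le.
Qed.

(* Garding's argument: move the direction from [e] (at [u = 1]) to [y] (at [u = 0]) along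
   the segment, keeping the base point [x + i e]; having no root [t] with [Im t >= 0] is
   both an open and a closed condition on [u]. *)
Let root_free x u := forall t, 0 <= Im t -> F (cline (cplx x e) (seg y e u) t) <> RC 0.

Lemma root_free_near x u : 0 <= u <= 1 -> root_free x u ->
  exists dl, 0 < dl /\ forall u', 0 <= u' <= 1 -> Rabs (u' - u) < dl -> root_free x u'.
Proof.
  move=> Hu HP. have Hc0 := seg_dir_neq0 u Hu.
  have [rs [Hroots Hlow]] := F_line_lower_bound (cplx x e) (seg y e u) Hc0.
  have [|mu [Hmu Hmu_le]] := list_pos_lower_bound (fun r => - Im r) rs.
  { move=> r Hr. apply: Rnot_le_lt => Hr'. apply: (HP r); [lra | exact: Hroots]. }
  pose rho := lsum Cmod rs. have Hrho : 0 <= rho by apply: lsum_nonneg => r; exact: Cmod_ge_0.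
  pose kap := mu / (1 + rho + mu). have Hkap : 0 < kap by apply: Rdiv_lt_0_compat; lra.
  pose L := Cmod (F (Rv (seg y e u))) * kap ^ d.
  have HL : 0 < L by apply: Rmult_lt_0_compat; [exact/Cmod_gt_0 | exact: pow_lt].
  pose K := lip_const (norm1 x + S + 1) * S.
  have Hl : 0 <= lip_const (norm1 x + S + 1).
  { apply: lip_const_ge0. have := norm1_ge0 x. have := S_ge0. lra. }
  have HK : 0 <= K by apply: Rmult_le_pos => //; exact: S_ge0.
  have [dl [Hdl [_ Hsmall]]] := exists_small K L HK HL.
  exists dl. split => // u' Hu' Hd t Ht.
  have HT := Cmod_ge_0 t.
  apply: (neq0_of_close (F (cline (cplx x e) (seg y e u) t)) _ K dl L ((1 + Cmod t) ^ d)) => //.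
  - apply: pow_lt. lra.
  - rewrite /L Rmult_assoc -Rpow_mult_distr. apply: Hlow; first nra.
    move=> r Hr. apply: one_plus_scaled_le => //; first lra.
    + have := Hmu_le r Hr. have := Im_sub_le_Cmod t r. rewrite /= => *. lra.
    + have Hr_le : Cmod r <= rho := lsum_ge_term Cmod rs r Cmod_ge_0 Hr.
      have := Cmod_sub_ge t r. lra.
  - apply: Rle_trans (F_seg_lip x u u' t Hu Hu') _.
    have := mul3_le _ _ ((1 + Cmod t) ^ d) (Rabs (u - u')) dl Hl S_ge0 ltac:(apply: pow_le; lra)
      ltac:(rewrite Rabs_minus_sym in Hd; lra).
    rewrite /K. lra.
Qed.

Lemma not_root_free_near x u : 0 <= u <= 1 -> ~ root_free x u ->
  exists dl, 0 < dl /\ forall u', 0 <= u' <= 1 -> Rabs (u' - u) < dl -> ~ root_free x u'.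
Proof.
  move=> Hu HnP.
  have [t0 [Ht0 Hroot]] : exists t0, 0 <= Im t0 /\ F (cline (cplx x e) (seg y e u) t0) = RC 0.
  { apply: NNPP => Hn. apply: HnP => t Ht H0. apply: Hn. by exists t. }
  have {}Ht0 : 0 < Im t0.
  { case: (Req_dec (Im t0) 0) => [E|]; last lra. by case: (no_real_root x _ _ E Hroot). }
  pose c := F (Rv (seg y e u)).
  have Hc : 0 < Cmod c by apply/Cmod_gt_0; exact: seg_dir_neq0.
  pose L := Cmod c / 2 * Im t0 ^ d.
  have HL : 0 < L by apply: Rmult_lt_0_compat; [lra | exact: pow_lt].
  have Hl0 : 0 <= lip_const (S + 1) by apply: lip_const_ge0; have := S_ge0; lra.
  have Hlx : 0 <= lip_const (norm1 x + S + 1).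
  { apply: lip_const_ge0. have := norm1_ge0 x. have := S_ge0. lra. }
  have [dl1 [Hdl1 [_ Hsmall1]]] :=
    exists_small (lip_const (S + 1) * S * 2 ^ d) (Cmod c / 2)
      ltac:(apply: Rmult_le_pos; [exact: Rmult_le_pos Hl0 S_ge0 | apply: pow_le; lra]) ltac:(lra).
  pose K := lip_const (norm1 x + S + 1) * S * (1 + Cmod t0) ^ d.
  have HK : 0 <= K.
  { apply: Rmult_le_pos; first exact: Rmult_le_pos Hlx S_ge0.
    apply: pow_le. have := Cmod_ge_0 t0. lra. }
  have [dl2 [Hdl2 [_ Hsmall2]]] := exists_small K L HK HL.
  exists (Rmin dl1 dl2). split; first exact: Rmin_glb_lt.
  move=> u' Hu' Hd HP'. rewrite Rabs_minus_sym in Hd.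
  have Hd1 : Rabs (u - u') <= dl1 by have := Rmin_l dl1 dl2; lra.
  have Hd2 : Rabs (u - u') <= dl2 by have := Rmin_r dl1 dl2; lra.
  have Hc' : Cmod c / 2 <= Cmod (F (Rv (seg y e u'))).
  { have := F_seg_dir_lip u u' Hu Hu'. have := Cmod_sub_ge c (F (Rv (seg y e u'))).
    have := mul3_le _ _ (2 ^ d) _ _ Hl0 S_ge0 ltac:(apply: pow_le; lra) Hd1.
    rewrite -/c. lra. }
  have [rs [Hroots Hlow]] := F_line_lower_bound (cplx x e) (seg y e u') (seg_dir_neq0 u' Hu').
  apply: (neq0_of_close (F (cline (cplx x e) (seg y e u') t0)) _ K dl2 L 1 Rlt_0_1 Hsmall2 _ _
    Hroot).
  - rewrite Rmult_1_r /L. apply: Rle_trans (Hlow t0 (Im t0) (Rlt_le _ _ Ht0) _).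
    + apply: Rmult_le_compat_r => //. apply: pow_le. lra.
    + move=> r Hr. have : Im r < 0.
      { apply: Rnot_le_lt => Hr'. exact: HP' r Hr' (Hroots r Hr). }
      have := Im_sub_le_Cmod t0 r. lra.
  - rewrite Cmod_sub_sym Rmult_1_r. apply: Rle_trans (F_seg_lip x u u' t0 Hu Hu') _.
    apply: mul3_le => //. apply: pow_le. have := Cmod_ge_0 t0. lra.
Qed.

Lemma cplx_line_root_free x t : 0 <= Im t -> F (cline (cplx x e) y t) <> RC 0.
Proof.
  have HP1 : root_free x 1.
  { move=> s Hs. rewrite seg1 => H. have [_ He'] := proj1 (hyperbolicE e) He.
    have : Im (s + Ci)%C = 0.
    { apply: (He' x). rewrite -H. congr peval. apply: functional_extensionality => i.
      case: s {Hs H} => a b. apply: injective_projections => /=; ring. }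
    rewrite /Im /= in Hs *. lra. }
  have Hloc : locally_constant_01 (root_free x).
  { move=> u Hu. case: (classic (root_free x u)) => HPu.
    - have [dl [Hdl H]] := root_free_near x u Hu HPu.
      exists dl. split => // u' Hu' Hd. split => // _. exact: H.
    - have [dl [Hdl H]] := not_root_free_near x u Hu HPu.
      exists dl. split => // u' Hu' Hd. split => // HP'. by case: (H u' Hu' Hd). }
  move: (proj2 (locally_constant_01_iff _ Hloc) HP1) => /(_ t). by rewrite seg0.
Qed.

Lemma scaled_cplx_line_root_free x (s : R) t : 0 < s -> 0 <= Im t ->
  F (cline (cplx x (fun i => s * e i)) y t) <> RC 0.
Proof.
  move=> Hs Ht.
  pose xs i := x i / s. pose ts : Complex.C := (Re t / s, Im t / s).
  have -> : F (cline (cplx x (fun i => s * e i)) y t)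
          = (RC s ^ d * F (cline (cplx xs e) y ts))%C :> Complex.C.
  { rewrite -F_scale. congr peval. apply: functional_extensionality => i.
    rewrite /xs /ts /cline /cplx. case: t {Ht ts} => a b.
    apply: injective_projections => /=; field; lra. }
  apply: Cmult_neq_0; first by apply: RC_pow_neq0; lra.
  apply: cplx_line_root_free. rewrite /Im /=. apply: Rmult_le_pos => //.
  apply: Rlt_le. exact: Rinv_0_lt_compat.
Qed.

Lemma line_root_free_upper x t0 : 0 < Im t0 -> F (cline (Rv x) y t0) <> RC 0.
Proof.
  move=> Ht0 Hroot.
  have Hy0 := hyp_cone_neq0 e y Hy.
  pose B := norm1 x + norm1 e + norm1 y + 1.
  have := norm1_ge0 x. have := norm1_ge0 e. have := norm1_ge0 y. have := Cmod_ge_0 t0. move=> *.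
  pose K := lip_const B * norm1 e * (1 + Cmod t0) ^ d.
  have HK : 0 <= K.
  { apply: Rmult_le_pos; [apply: Rmult_le_pos => //; apply: lip_const_ge0; rewrite /B; lra |].
    apply: pow_le. lra. }
  pose L := Cmod (F (Rv y)) * Im t0 ^ d.
  have HL : 0 < L by apply: Rmult_lt_0_compat; [exact/Cmod_gt_0 | exact: pow_lt].
  have [s [Hs [Hs1 Hsmall]]] := exists_small K L HK HL.
  pose zs := cplx x (fun i => s * e i).
  have [rs [Hroots Hlow]] := F_line_lower_bound zs y Hy0.
  apply: (neq0_of_close (F (cline zs y t0)) _ K s L 1 Rlt_0_1 Hsmall _ _ Hroot).
  - rewrite Rmult_1_r. apply: Hlow; first lra.
    move=> r Hr. have : Im r < 0.
    { apply: Rnot_le_lt => Hr'. exact: scaled_cplx_line_root_free x s r Hs Hr' (Hroots r Hr). }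
    have := Im_sub_le_Cmod t0 r. lra.
  - rewrite Rmult_1_r. apply: Rle_trans.
    + apply: (F_line_lip _ _ _ _ _ B (s * norm1 e)); rewrite /B; try nra; move=> i.
      * apply: Rle_trans (Cmod_pair_le _ _) _. rewrite Rabs_mult (Rabs_pos_eq s); last lra.
        have := abs_le_norm1 x i. have := abs_le_norm1 e i. have := Rabs_pos (e i). nra.
      * have := Cmod_Rv_le x i. lra.
      * have := abs_le_norm1 y i. lra.
      * have := abs_le_norm1 y i. lra.
      * have -> : (zs i - Rv x i)%C = (0, s * e i).
        { apply: injective_projections => /=; ring. }
        apply: Rle_trans (Cmod_pair_le _ _) _. rewrite Rabs_R0 Rabs_mult (Rabs_pos_eq s); last lra.
        have := abs_le_norm1 e i. have := Rabs_pos (e i). nra.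
      * rewrite Rminus_diag Rabs_R0. nra.
    + right. rewrite /K. ring.
Qed.

End Garding.

Lemma hyperbolic_of_hyp_cone e y : hyperbolic f e -> hyp_cone f e y -> hyperbolic f y.
Proof.
  move=> He Hy. apply/hyperbolicE. split; first exact: hyp_cone_neq0 Hy.
  move=> x t Ht. apply: NNPP => Hnz.
  case: (Rlt_dec 0 (Im t)) => Hpos; first exact: line_root_free_upper He Hy x t Hpos Ht.
  apply: (line_root_free_upper e y He Hy (fun i => - x i) (- t)%C).
  - case: t {Ht} Hnz Hpos => a b /= Hnz Hpos. rewrite /Im /= in Hnz Hpos *. lra.
  - have -> : F (cline (Rv (fun i => - x i)) y (- t)%C) = (RC (-1) ^ d * F (cline (Rv x) y t))%C
              :> Complex.C.
    { rewrite -F_scale. congr peval. apply: functional_extensionality => i.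
      apply: injective_projections => /=; ring. }
    rewrite Ht. cring.
Qed.

Lemma hyp_cone_connected e : hyperbolic f e -> connected (hyp_cone f e).
Proof.
  move=> /hyperbolic_neq0 He0. apply: (star_connected _ e); first exact: hyp_cone_self.
  move=> x u Hx Hu. exact: hyp_cone_seg.
Qed.

Lemma hyp_cone_not_imag_proj e x : hyperbolic f e -> hyp_cone f e x -> ~ imag_proj f x.
Proof. move=> He Hx. apply: hyperbolic_not_imag_proj. exact: hyperbolic_of_hyp_cone He Hx. Qed.

Lemma hyp_cone_maximal e (K : ('I_n -> R) -> Prop) : hyperbolic f e -> connected K ->
  (forall x, hyp_cone f e x -> K x) -> (forall x, K x -> ~ imag_proj f x) ->
  forall x, K x -> hyp_cone f e x.
Proof.
  move=> He HK Hsub Hni x Kx. apply: NNPP => Hnc. apply: HK.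
  have Ce : hyp_cone f e e := hyp_cone_self e (hyperbolic_neq0 e He).
  have nz q : K q -> F (Rv q) <> RC 0.
  { move=> Kq. exact: hyperbolic_neq0 q (not_imag_proj_hyperbolic q (Hni q Kq)). }
  exists (hyp_cone f e), (fun q => F (Rv q) <> RC 0 /\ ~ hyp_cone f e q).
  split; first exact: hyp_cone_open.
  split; first by move=> q [Hq1 Hq2]; exact: hyp_cone_compl_open.
  split; first by move=> q Kq; case: (classic (hyp_cone f e q)); [left | right; split; auto].
  split; first by exists e; split; [exact: Hsub |].
  split; first by exists x; split; [| split; [exact: nz |]].
  by move=> q _ Hq [_ Hnz].
Qed.

Lemma hyp_cone_component e : hyperbolic f e ->
  connected_component (fun y => ~ imag_proj f y) (hyp_cone f e).
Proof.
  move=> He. split; first by exists e; exact: hyp_cone_self (hyperbolic_neq0 e He).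
  split; first by move=> x; exact: hyp_cone_not_imag_proj.
  split; first exact: hyp_cone_connected.
  move=> K HK Hsub Hni. exact: hyp_cone_maximal.
Qed.

Lemma hyp_cone_iff_component (K : ('I_n -> R) -> Prop) :
  (exists e, hyperbolic f e /\ forall x, K x <-> hyp_cone f e x) <->
  connected_component (fun y => ~ imag_proj f y) K.
Proof.
  split.
  - move=> [e [He HK]].
    have -> : K = hyp_cone f e.
    { apply: functional_extensionality => x. exact: propositional_extensionality. }
    exact: hyp_cone_component.
  - move=> [[p Kp] [Ksub [Kconn Kmax]]].
    have Hp := not_imag_proj_hyperbolic p (Ksub p Kp).
    have [_ [Csub [Cconn Cmax]]] := hyp_cone_component p Hp.
    have Cp : hyp_cone f p p := hyp_cone_self p (hyperbolic_neq0 p Hp).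
    have Uconn := connected_union _ _ p Kconn Cconn Kp Cp.
    have Usub x : K x \/ hyp_cone f p x -> ~ imag_proj f x by case; [exact: Ksub | exact: Csub].
    exists p. split => // x. split => Hx.
    + exact: Cmax _ Uconn (fun q Hq => or_intror Hq) Usub x (or_introl Hx).
    + exact: Kmax _ Uconn (fun q Hq => or_introl Hq) Usub x (or_intror Hx).
Qed.

End HyperbolicityCones.

Theorem theorem1p1 (n : nat) (f : rpoly n) (Hf : homogeneous f)
  (K : ('I_n -> R) -> Prop) :
  (exists e : 'I_n -> R, hyperbolic f e /\ forall x, K x <-> hyp_cone f e x)
  <-> connected_component (fun y => ~ imag_proj f y) K.
Proof. have [d Hd] := Hf. exact: hyp_cone_iff_component Hd K. Qed.
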